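(* Let $p$ be an odd prime, $\chi$ a Dirichlet character with odd conductor $f$, and $n,c,k$ positive integers with $c\equiv0\pmod{p-1}$. Then $$\Delta_c^k\epsilon_{n,\chi}\equiv0\pmod{p^k\mathbb Z_p[\chi]},$$ where $\Delta_c^k a_n=\sum_{j=0}^k\binom kj(-1)^{k-j}a_{n+jc}$.
   Context: $\mathbb Z_p[\chi]$ is the ring generated over $\mathbb Z_p$ by the values of $\chi$. For a primitive Dirichlet character $\psi$ of odd conductor $f_\psi$, the generalized Euler numbers $E_{n,\psi}$ are defined by $2\sum_{a=1}^{f_\psi}\frac{(-1)^a\psi(a)e^{at}}{e^{f_\psi t}+1}=\sum_{n\ge0}E_{n,\psi}\frac{t^n}{n!}$ (with $\psi(a)=0$ if $\gcd(a,f_\psi)>1$). Let $\omega$ be the Teichmüller character mod $p$. For $n\ge0$, $\chi_n$ is the primitive Dirichlet character associated with $a\mapsto\chi(a)\omega^{-n}(a)$ on $(\mathbb Z/\mathrm{lcm}(f,p)\mathbb Z)^\times$, and $\epsilon_{n,\chi}=(1-\chi_n(p)p^n)E_{n,\chi_n}$. *)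

From HB Require Import structures.
From mathcomp Require Import all_boot all_order all_algebra all_field.
Set Implicit Arguments. Unset Strict Implicit. Unset Printing Implicit Defensive.
Import Order.TTheory GRing.Theory Num.Theory.
Local Open Scope ring_scope.

Definition is_dirichlet (N : nat) (chi : nat -> algC) : Prop :=
  [/\ (0 < N)%N, chi 1%N = 1,
      (forall a b : nat, chi (a * b)%N = chi a * chi b),
      (forall a : nat, chi (a + N)%N = chi a) &
      (forall a : nat, (chi a == 0) = ~~ coprime a N)].

Definition induced_mod (N d : nat) (chi : nat -> algC) : bool :=
  (d %| N)%N &&
  [forall a : 'I_N, forall b : 'I_N,
     [&& coprime a N, coprime b N & a == b %[mod d]] ==> (chi a == chi b)].

Definition conductor (N : nat) (chi : nat -> algC) : nat :=
  head N [seq d <- iota 1 N | induced_mod N d chi].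

Definition primitive_char (N : nat) (chi : nat -> algC) : Prop :=
  is_dirichlet N chi /\ conductor N chi = N.

Definition lift_coprime (N d a : nat) : nat :=
  (a + d * head 0 [seq t <- iota 0 N | coprime (a + d * t) N])%N.

Definition prim_assoc (N : nat) (chi : nat -> algC) : nat -> algC :=
  fun a => if coprime a (conductor N chi) then chi (lift_coprime N (conductor N chi) a)
           else 0.

(* A fixed embedding of Qbar into Cp is encoded by the prime ideal P of the ring
   Aint of algebraic integers (in algC) lying above p. *)
Definition prime_ideal_above (p : nat) (P : pred algC) : Prop :=
  [/\ {subset P <= Aint}, 0 \in P, (p%:R : algC) \in P & (1 : algC) \notin P] /\
  [/\ (forall x y, x \in P -> y \in P -> x + y \in P),
      (forall x y, x \in Aint -> y \in P -> x * y \in P) &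
      (forall x y, x \in Aint -> y \in Aint -> x * y \in P -> (x \in P) || (y \in P))].

(* x lies in the valuation ring of P (for x in a finite extension of Q this is
   integrality in the completion at P). *)
Definition P_integral (P : pred algC) (x : algC) : Prop :=
  exists a b : algC, [/\ a \in Aint, b \in Aint, b \notin P & x = a / b].

Definition unity_roots (m : nat) : seq algC :=
  let z := sval (C_prim_root_exists (ltn0Sn m.-1)) in [seq z ^+ i | i <- iota 0 m].

Definition teich (P : pred algC) (p : nat) (a : nat) : algC :=
  if (p %| a)%N then 0 else head 0 [seq x <- unity_roots p.-1 | P (x - a%:R)].

(* E_{n,psi} for psi of conductor F, defined by the generating function
     2 sum_{a=1}^F (-1)^a psi(a) e^{at} / (e^{Ft}+1) = sum_n E_{n,psi} t^n/n!,
   i.e. (multiplying by e^{Ft}+1 and comparing coefficients of t^n/n!)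
     E_n + sum_{j=0}^n C(n,j) F^(n-j) E_j = 2 sum_{a=1}^F (-1)^a psi(a) a^n. *)
Definition euler_rhs (F : nat) (psi : nat -> algC) (n : nat) : algC :=
  2 * \sum_(1 <= a < F.+1) (-1) ^+ a * psi a * (a%:R) ^+ n.

Fixpoint euler_seq (F : nat) (psi : nat -> algC) (n : nat) : seq algC :=
  match n with
  | 0 => [:: euler_rhs F psi 0 / 2]
  | m.+1 => let s := euler_seq F psi m in
      rcons s ((euler_rhs F psi m.+1
                - \sum_(j < m.+1) ('C(m.+1, j))%:R * (F%:R) ^+ (m.+1 - j) * s`_j) / 2)
  end.

Definition gen_euler (F : nat) (psi : nat -> algC) (n : nat) : algC :=
  (euler_seq F psi n)`_n.

Definition chi_tw (P : pred algC) (p f : nat) (chi : nat -> algC) (n : nat) : nat -> algC :=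
  fun a => if coprime a (lcmn f p) then chi a * (teich P p a) ^- n else 0.

Definition chi_n P p f chi n : nat -> algC := prim_assoc (lcmn f p) (chi_tw P p f chi n).
Definition cond_n P p f chi n : nat := conductor (lcmn f p) (chi_tw P p f chi n).

Definition eps (P : pred algC) (p f : nat) (chi : nat -> algC) (n : nat) : algC :=
  (1 - chi_n P p f chi n p * (p%:R) ^+ n) * gen_euler (cond_n P p f chi n) (chi_n P p f chi n) n.

Definition Delta (c k : nat) (a : nat -> algC) (n : nat) : algC :=
  \sum_(j < k.+1) ('C(k, j))%:R * (-1) ^+ (k - j) * a (n + j * c)%N.

From HB Require Import structures.
From mathcomp Require Import all_boot all_order all_algebra all_field all_solvable.
From mathcomp Require Import ring zify.
From Stdlib Require Import FunctionalExtensionality.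
Import Order.TTheory GRing.Theory Num.Theory.
Local Open Scope ring_scope.
Set Implicit Arguments. Unset Strict Implicit. Unset Printing Implicit Defensive.

(* Since [c] is a multiple of [p - 1], the twisted characters [chi_(n + j c)] all
   coincide with one primitive character [psi] of odd conductor [F].  Summing the
   recurrence defining [E_(m,psi)] over an odd number [r] of periods gives
   [E_(m,psi) = sum_(a <= F r) (-1)^a psi(a) a^m] modulo [F r].  Comparing [r = p^(k+1)]
   with [r = p^k] and splitting off the multiples of [p], [(1 - psi(p) p^m) E_(m,psi)]
   is congruent modulo [p^k] to the same sum restricted to [a] prime to [p].  On such
   a sum [Delta_c^k] produces the factor [(a^c - 1)^k], divisible by [p^k] by Fermat. *)

Section PrimeIdeal.
Variables (p : nat) (P : pred algC).
Hypothesis HP : prime_ideal_above p P.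

Lemma Pideal0 : (0 : algC) \in P. Proof. by case: HP => [[]]. Qed.
Lemma Pideal1 : (1 : algC) \notin P. Proof. by case: HP => [[]]. Qed.
Lemma Pideal_natp : (p%:R : algC) \in P. Proof. by case: HP => [[]]. Qed.

Lemma PidealD x y : x \in P -> y \in P -> x + y \in P.
Proof. by case: HP => [_ [H _ _]]; apply: H. Qed.

Lemma PidealMl x y : x \in Aint -> y \in P -> x * y \in P.
Proof. by case: HP => [_ [_ H _]]; apply: H. Qed.

Lemma PidealMr x y : x \in P -> y \in Aint -> x * y \in P.
Proof. by move=> Px Ay; rewrite mulrC; apply: PidealMl. Qed.

Lemma Pideal_prime x y :
  x \in Aint -> y \in Aint -> x * y \in P -> (x \in P) || (y \in P).
Proof. by case: HP => [_ [_ _ H]]; apply: H. Qed.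

Lemma PidealN x : x \in P -> - x \in P.
Proof. by move=> Px; rewrite -mulN1r PidealMl ?rpredN ?rpred1. Qed.

Lemma PidealB x y : x \in P -> y \in P -> x - y \in P.
Proof. by move=> Px Py; rewrite PidealD ?PidealN. Qed.

Lemma Pideal_nat_dvd m : (p %| m)%N -> (m%:R : algC) \in P.
Proof. by move=> /dvdnP[q ->]; rewrite natrM PidealMl ?rpred_nat ?Pideal_natp. Qed.

Lemma Pideal_prodP (I : eqType) (r : seq I) (F : I -> algC) :
  (forall i, F i \in Aint) -> \prod_(i <- r) F i \in P -> exists2 i, i \in r & F i \in P.
Proof.
move=> AF; elim: r => [|a r IHr]; first by rewrite big_nil (negPf Pideal1).
rewrite big_cons => /(Pideal_prime (AF a) (rpred_prod _ (fun i _ => AF i))).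
case/orP => [Pa | /IHr[i ri Pi]]; first by exists a; rewrite ?mem_head.
by exists i; rewrite // in_cons ri orbT.
Qed.

Lemma Pideal_prod (I : eqType) (r : seq I) (F : I -> algC) i0 :
  (forall i, F i \in Aint) -> i0 \in r -> F i0 \in P -> \prod_(i <- r) F i \in P.
Proof.
move=> AF; elim: r => [|a r IHr] //; rewrite in_cons big_cons.
case/orP => [/eqP <- Pi | ri Pi]; first by rewrite PidealMr ?rpred_prod.
by rewrite PidealMl ?IHr.
Qed.

Lemma Pideal_mul_notin x y :
  x \in Aint -> y \in Aint -> x \notin P -> y \notin P -> x * y \notin P.
Proof.
by move=> Ax Ay Px Py; apply/negP=> /(Pideal_prime Ax Ay); rewrite (negPf Px) (negPf Py).
Qed.

Lemma Pideal_notin_neq0 x : x \notin P -> x != 0.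
Proof. by apply: contraNneq => ->; apply: Pideal0. Qed.

Lemma P_integral_Aint x : x \in Aint -> P_integral P x.
Proof. by move=> Ax; exists x, 1; rewrite divr1 rpred1 Pideal1. Qed.

Lemma P_integral_nat m : P_integral P m%:R.
Proof. exact/P_integral_Aint/rpred_nat. Qed.

Lemma P_integral_div x b :
  b \in Aint -> b \notin P -> P_integral P x -> P_integral P (x / b).
Proof.
move=> Ab Pb [u [v [Au Av Pv ->]]]; exists u, (v * b).
by rewrite rpredM ?Pideal_mul_notin // invfM mulrA.
Qed.

Lemma P_integralD x y : P_integral P x -> P_integral P y -> P_integral P (x + y).
Proof.
move=> [a [b [Aa Ab Pb ->]]] [c [d [Ac Ad Pd ->]]].
exists (a * d + c * b), (b * d); rewrite ?rpredD ?rpredM ?Pideal_mul_notin //.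
have b0 := Pideal_notin_neq0 Pb; have d0 := Pideal_notin_neq0 Pd.
by split=> //; field; apply/andP.
Qed.

Lemma P_integralM x y : P_integral P x -> P_integral P y -> P_integral P (x * y).
Proof.
move=> [a [b [Aa Ab Pb ->]]] [c [d [Ac Ad Pd ->]]].
by exists (a * c), (b * d); rewrite ?rpredM ?Pideal_mul_notin // invfM mulrACA.
Qed.

Lemma P_integralN x : P_integral P x -> P_integral P (- x).
Proof.
move=> Px; rewrite -mulN1r; apply: P_integralM => //.
by apply/P_integral_Aint; rewrite rpredN rpred1.
Qed.

Lemma P_integralB x y : P_integral P x -> P_integral P y -> P_integral P (x - y).
Proof. by move=> Px Py; apply: P_integralD => //; apply: P_integralN. Qed.

Lemma P_integral_sum (I : Type) (r : seq I) (F : I -> algC) :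
  (forall i, P_integral P (F i)) -> P_integral P (\sum_(i <- r) F i).
Proof.
move=> PF; elim: r => [|a r IHr]; first by rewrite big_nil; apply/P_integral_Aint/rpred0.
by rewrite big_cons; apply: P_integralD.
Qed.

Hypothesis p_odd : odd p.

Lemma Pideal_2 : (2 : algC) \notin P.
Proof.
apply/negP => P2; suff: (1 : algC) \in P by rewrite (negPf Pideal1).
have -> : 1 = p%:R - (p./2)%:R * 2 :> algC.
  by rewrite -[in p%:R](odd_double_half p) p_odd natrD -muln2 natrM addrK.
by rewrite PidealB ?PidealMl ?rpred_nat ?Pideal_natp.
Qed.

Lemma P_integral_half x : P_integral P x -> P_integral P (x / 2).
Proof. by apply: P_integral_div; rewrite ?rpred_nat ?Pideal_2. Qed.

End PrimeIdeal.

Section ExponentialShift.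
Variable R : comNzRingType.
Implicit Types (x y a : R) (u v : nat -> R).

(* [eshift x u] has exponential generating function [e^(x t)] times that of [u]. *)
Definition eshift x u m : R := \sum_(j < m.+1) 'C(m, j)%:R * x ^+ (m - j) * u j.

Lemma eq_eshift x u v m : (forall j, u j = v j) -> eshift x u m = eshift x v m.
Proof. by move=> euv; apply: eq_bigr => j _; rewrite euv. Qed.

Lemma eshiftD x u v m : eshift x (fun j => u j + v j) m = eshift x u m + eshift x v m.
Proof. by rewrite /eshift -big_split; apply: eq_bigr => j _; rewrite mulrDr. Qed.

Lemma eshiftZ x a u m : eshift x (fun j => a * u j) m = a * eshift x u m.
Proof. by rewrite /eshift mulr_sumr; apply: eq_bigr => j _; ring. Qed.

Lemma eshift_recr x u m :
  eshift x u m = \sum_(j < m) 'C(m, j)%:R * x ^+ (m - j) * u j + u m.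
Proof. by rewrite /eshift big_ord_recr /= binn subnn expr0 !mul1r. Qed.

Lemma eshift0 u m : eshift 0 u m = u m.
Proof.
rewrite eshift_recr big1 ?add0r // => j _.
by rewrite expr0n subn_eq0 leqNgt ltn_ord mulr0 mul0r.
Qed.

Lemma eshiftS x u m : eshift x u m.+1 = x * eshift x u m + eshift x (fun j => u j.+1) m.
Proof.
rewrite /eshift big_ord_recl /= bin0 subn0.
have -> : \sum_(i < m.+1) 'C(m.+1, bump 0 i)%:R * x ^+ (m.+1 - bump 0 i) * u (bump 0 i)
    = \sum_(i < m.+1) 'C(m, i.+1)%:R * x ^+ (m - i) * u i.+1
      + \sum_(i < m.+1) 'C(m, i)%:R * x ^+ (m - i) * u i.+1.
  rewrite -big_split /=; apply: eq_bigr => i _.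
  by rewrite /bump /= add1n binS natrD subSS; ring.
rewrite addrA; congr (_ + _).
rewrite big_ord_recr /= bin_small // !mul0r addr0 big_distrr /= big_ord_recl /=.
rewrite bin0 subn0; congr (_ + _); first by rewrite exprS; ring.
apply: eq_bigr => i _.
by rewrite /bump /= add1n -(subnSK (ltn_ord i)) exprS; ring.
Qed.

Lemma eshift_comp x y u m : eshift x (eshift y u) m = eshift (x + y) u m.
Proof.
elim: m u => [|m IHm] u; first by rewrite /eshift !big_ord1 !bin0 !subn0 !expr0 !mul1r.
rewrite eshiftS (eshiftS (x + y)) -!IHm (eq_eshift x _ (fun j => eshiftS y u j)).
by rewrite eshiftD eshiftZ IHm; ring.
Qed.

Lemma eshift_geom x a m : eshift x (fun j => a ^+ j) m = (a + x) ^+ m.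
Proof. by rewrite addrC exprDn; apply: eq_bigr => j _; rewrite -mulr_natl; ring. Qed.

Lemma eshift_power_sum x (I : Type) (r : seq I) (c b : I -> R) m :
  eshift x (fun j => \sum_(i <- r) c i * b i ^+ j) m = \sum_(i <- r) c i * (b i + x) ^+ m.
Proof.
elim: r => [|i r IHr]; first by rewrite big_nil /eshift big1 // => j _; rewrite big_nil mulr0.
rewrite big_cons -IHr -eshift_geom -eshiftZ -eshiftD.
by apply: eq_eshift => j; rewrite big_cons.
Qed.

Lemma alt_telescope (g : nat -> R) r :
  \sum_(i < r) (-1) ^+ i * (g i.+1 + g i) = g 0%N - (-1) ^+ r * g r.
Proof.
elim: r => [|r IHr]; first by rewrite big_ord0 expr0 mul1r subrr.
by rewrite big_ord_recr /= IHr exprS; ring.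
Qed.

End ExponentialShift.

Lemma sum_blocks (V : nmodType) (h : nat -> V) F r :
  \sum_(i < r) \sum_(1 <= a < F.+1) h (a + i * F)%N = \sum_(1 <= a < (r * F).+1) h a.
Proof.
elim: r => [|r IHr]; first by rewrite big_ord0 mul0n big_geq.
rewrite big_ord_recr /= IHr (@big_cat_nat _ _ _ (r * F).+1 1 (r.+1 * F).+1) //=.
  congr (_ + _); rewrite -[(r * F).+1]/(1 + r * F)%N big_addn.
  by congr (\sum_(1 <= i < _) _); rewrite mulSn; lia.
by rewrite mulSn; lia.
Qed.

Lemma sum_multiples (V : nmodType) (h : nat -> V) p M : (0 < p)%N ->
  \sum_(1 <= a < (p * M).+1 | (p %| a)%N) h a = \sum_(1 <= b < M.+1) h (p * b)%N.
Proof.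
move=> p_gt0; elim: M => [|M IHM]; first by rewrite muln0 !big_geq.
rewrite (@big_cat_nat _ _ _ (p * M).+1) //=; last by rewrite ltnS leq_pmul2l.
rewrite IHM [in RHS]big_nat_recr //=; congr (_ + _).
rewrite big_mkcond big_nat_recr /=; last by rewrite ltn_pmul2l.
rewrite dvdn_mulr // -[RHS]add0r; congr (_ + _).
rewrite big_nat_cond big1 // => i /andP[/andP[lo hi] _].
case: ifP => // /dvdnP[q iE]; move: lo hi; rewrite iE [(q * p)%N]mulnC !ltn_pmul2l //; lia.
Qed.

Section Periodic.
Variables (T : Type) (h : nat -> T) (N : nat).
Hypothesis h_per : forall a, h (a + N)%N = h a.

Lemma periodic_addMn a k : h (a + k * N)%N = h a.
Proof. by elim: k => [|k IHk]; rewrite ?addn0 // mulSn addnCA addnC h_per. Qed.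

Lemma periodic_modn a : h (a %% N)%N = h a.
Proof. by rewrite {2}(divn_eq a N) addnC periodic_addMn. Qed.

End Periodic.

Lemma head_filter_mem (T : eqType) (x0 : T) (a : pred T) s :
  has a s -> head x0 (filter a s) \in filter a s.
Proof. by rewrite has_filter; case: (filter a s) => //= y t _; rewrite mem_head. Qed.

Definition alt_power_sum (M : nat) (psi : nat -> algC) (m : nat) : algC :=
  \sum_(1 <= a < M.+1) (-1) ^+ a * psi a * a%:R ^+ m.

Section EulerNumbers.
Variables (psi : nat -> algC) (F : nat).
Local Notation E := (gen_euler F psi).

Lemma size_euler_seq m : size (euler_seq F psi m) = m.+1.
Proof. by elim: m => [|m IHm] //=; rewrite size_rcons IHm. Qed.

Lemma nth_euler_seq m j : (j <= m)%N -> (euler_seq F psi m)`_j = E j.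
Proof.
elim: m => [|m IHm]; first by rewrite leqn0 => /eqP ->.
rewrite leq_eqVlt => /predU1P[-> // | ltjm].
by rewrite /= nth_rcons size_euler_seq ltjm IHm.
Qed.

Lemma gen_euler_rec m : eshift F%:R E m + E m = euler_rhs F psi m.
Proof.
rewrite eshift_recr; case: m => [|m]; first by rewrite big_ord0 add0r /gen_euler /=; field.
rewrite (eq_bigr (fun j : 'I_m.+1 =>
    'C(m.+1, j)%:R * F%:R ^+ (m.+1 - j) * (euler_seq F psi m)`_j)); last first.
  by move=> j _; rewrite nth_euler_seq // -ltnS.
by rewrite /gen_euler /= nth_rcons size_euler_seq ltnn eqxx; field.
Qed.

Hypotheses (F_odd : odd F) (psi_per : forall a, psi (a + F)%N = psi a).

Lemma eshift_gen_euler_block i m :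
  eshift (i.+1 * F)%:R E m + eshift (i * F)%:R E m = eshift (i * F)%:R (euler_rhs F psi) m.
Proof.
rewrite mulSn natrD [F%:R + _]addrC -eshift_comp -eshiftD.
by apply: eq_eshift => j; rewrite gen_euler_rec.
Qed.

Lemma alt_eshift_euler_rhs i m :
  (-1) ^+ i * eshift (i * F)%:R (euler_rhs F psi) m =
  \sum_(1 <= a < F.+1) 2 * (-1) ^+ (a + i * F) * psi (a + i * F)%N * (a + i * F)%N%:R ^+ m.
Proof.
have rhsE j : euler_rhs F psi j = \sum_(a <- index_iota 1 F.+1) 2 * (-1) ^+ a * psi a * a%:R ^+ j.
  by rewrite /euler_rhs mulr_sumr; apply: eq_bigr => a _; rewrite !mulrA.
rewrite (eq_eshift _ _ rhsE) eshift_power_sum mulr_sumr; apply: eq_bigr => a _.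
have sgF : (-1) ^+ F = -1 :> algC by rewrite -signr_odd F_odd expr1.
by rewrite (periodic_addMn psi_per) natrD exprD mulnC exprM sgF; ring.
Qed.

Lemma gen_euler_rec_mul r m :
  odd r -> eshift (F * r)%:R E m + E m = euler_rhs (F * r) psi m.
Proof.
move=> r_odd; have := alt_telescope (fun i => eshift (i * F)%:R E m) r.
rewrite mul0n eshift0 -signr_odd r_odd expr1 mulN1r opprK mulnC addrC => <-.
under eq_bigr => i _ do rewrite eshift_gen_euler_block alt_eshift_euler_rhs.
rewrite (sum_blocks (fun b => 2 * (-1) ^+ b * psi b * b%:R ^+ m)) /euler_rhs.
by rewrite mulnC mulr_sumr; apply: eq_bigr => a _; rewrite !mulrA.
Qed.

End EulerNumbers.

Section EulerIntegrality.
Variables (p : nat) (P : pred algC).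
Hypotheses (HP : prime_ideal_above p P) (p_odd : odd p).
Variables (psi : nat -> algC) (F : nat).
Hypothesis psi_Aint : forall a, psi a \in Aint.

Lemma gen_euler_P_integral m : P_integral P (gen_euler F psi m).
Proof.
elim/ltn_ind: m => m IHm; have := gen_euler_rec psi F m; rewrite eshift_recr => Em.
have -> : gen_euler F psi m = (euler_rhs F psi m -
    \sum_(j < m) 'C(m, j)%:R * F%:R ^+ (m - j) * gen_euler F psi j) / 2.
  by rewrite -Em; field.
apply: (P_integral_half HP p_odd); apply: (P_integralB HP).
  apply: (P_integralM HP); first exact: (P_integral_nat HP 2).
  apply: (P_integral_sum HP) => a; apply: (P_integral_Aint HP).
  by rewrite !rpredM ?rpredX ?rpredN ?rpred1 ?rpred_nat.
apply: (P_integral_sum HP) => j; apply: (P_integralM HP); last exact: IHm.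
by apply: (P_integral_Aint HP); rewrite !rpredM ?rpredX ?rpred_nat.
Qed.

Hypotheses (F_odd : odd F) (psi_per : forall a, psi (a + F)%N = psi a).

Lemma gen_euler_cong r m : odd r ->
  exists2 W, P_integral P W & gen_euler F psi m = alt_power_sum (F * r) psi m + (F * r)%:R * W.
Proof.
move=> r_odd; have := gen_euler_rec_mul F_odd psi_per m r_odd; rewrite eshift_recr.
set Q := \sum_(j < m) 'C(m, j)%:R * (F * r)%:R ^+ (m - j).-1 * gen_euler F psi j.
have -> : \sum_(j < m) 'C(m, j)%:R * (F * r)%:R ^+ (m - j) * gen_euler F psi j = (F * r)%:R * Q.
  rewrite mulr_sumr; apply: eq_bigr => j _.
  by rewrite -[(m - j)%N]prednK ?subn_gt0 // exprS; ring.
move=> Em; exists (- Q / 2); last first.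
  have {}Em : 2 * gen_euler F psi m = 2 * alt_power_sum (F * r) psi m - (F * r)%:R * Q.
    by rewrite -[2 * alt_power_sum _ _ _]/(euler_rhs (F * r) psi m) -Em; ring.
  have -> : gen_euler F psi m = 2 * gen_euler F psi m / 2 by field.
  by rewrite Em; field.
apply: (P_integral_half HP p_odd); apply: (P_integralN HP); apply: (P_integral_sum HP) => j.
apply: (P_integralM HP); last exact: gen_euler_P_integral.
by apply: (P_integral_Aint HP); rewrite !rpredM ?rpredX ?rpred_nat.
Qed.

End EulerIntegrality.

Lemma fermat_dvdn p a c : prime p -> (p.-1 %| c)%N -> ~~ (p %| a)%N -> (p %| a ^ c - 1)%N.
Proof.
move=> p_pr /dvdnP[l ->] pNa; have a_gt0 : (0 < a)%N by case: a pNa; rewrite ?dvdn0.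
rewrite -eqn_mod_dvd ?expn_gt0 ?a_gt0 // mulnC expnM -modnXm -totient_prime //.
by rewrite Euler_exp_totient ?modnXm ?exp1n // coprime_sym prime_coprime.
Qed.

Section PrimitiveRoot.
Variables (R : fieldType) (m : nat) (z : R).
Hypothesis z_prim : m.-primitive_root z.

Lemma prod_sub_prim_root x : \prod_(0 <= i < m) (x - z ^+ i) = x ^+ m - 1.
Proof.
have := congr1 (horner^~ x) (factor_Xn_sub_1 z_prim).
rewrite /= horner_prod; under eq_bigr => i _ do rewrite hornerXsubC.
by move=> ->; rewrite !hornerE.
Qed.

Lemma prod_1_sub_prim_root : \prod_(1 <= i < m) (1 - z ^+ i) = m%:R.
Proof.
have := factor_Xn_sub_1 z_prim.
rewrite (big_ltn (prim_order_gt0 z_prim)) expr0 -[X in _ = _ - X](expr1n _ m) subrXX.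
have X1_neq0 : ('X - 1%:P : {poly R}) != 0 by rewrite polyXsubC_eq0.
rewrite polyC1 in X1_neq0 *; move/(mulfI X1_neq0)/(congr1 (horner^~ 1)).
rewrite /= horner_prod; under eq_bigr => i _ do rewrite hornerXsubC.
move=> ->; rewrite horner_sum (eq_bigr (fun _ => 1)) ?sumr_const ?card_ord // => i _.
by rewrite expr1n mulr1 hornerXn expr1n.
Qed.

End PrimitiveRoot.

Section Teichmuller.
Variables (p : nat) (P : pred algC).
Hypotheses (HP : prime_ideal_above p P) (p_pr : prime p).

Let z := sval (C_prim_root_exists (ltn0Sn p.-2)).

Lemma pred_p_gt0 : (0 < p.-1)%N.
Proof. by case: p p_pr => [|[|q]]. Qed.

Lemma z_prim : p.-1.-primitive_root z.
Proof. by rewrite /z; case: C_prim_root_exists => w /=; rewrite prednK ?pred_p_gt0. Qed.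

Lemma z_Aint : z \in Aint.
Proof. exact: Aint_prim_root z_prim. Qed.

Lemma unity_rootsE : unity_roots p.-1 = [seq z ^+ i | i <- iota 0 p.-1].
Proof. by []. Qed.

Lemma unity_roots_exp u : u \in unity_roots p.-1 -> u ^+ p.-1 = 1.
Proof.
by rewrite unity_rootsE => /mapP[i _ ->]; rewrite exprAC (prim_expr_order z_prim) expr1n.
Qed.

Lemma unity_roots_Aint u : u \in unity_roots p.-1 -> u \in Aint.
Proof. by rewrite unity_rootsE => /mapP[i _ ->]; rewrite rpredX ?z_Aint. Qed.

Lemma unity_rootsM u v :
  u \in unity_roots p.-1 -> v \in unity_roots p.-1 -> u * v \in unity_roots p.-1.
Proof.
rewrite !unity_rootsE => /mapP[i _ ->] /mapP[j _ ->].
rewrite -exprD -(prim_expr_mod z_prim) map_f //.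
by rewrite mem_iota ltn_pmod ?pred_p_gt0.
Qed.

(* The product of all [1 - z^d] is [p - 1], which is a unit modulo [P]. *)
Lemma one_sub_prim_root_notin_P d : (0 < d < p.-1)%N -> 1 - z ^+ d \notin P.
Proof.
move=> d_range; apply/negP => Pd.
have Ppred : (p.-1%:R : algC) \in P.
  rewrite -(prod_1_sub_prim_root z_prim) (Pideal_prod HP (i0 := d)) ?mem_index_iota //.
  by move=> i; rewrite rpredB ?rpred1 ?rpredX ?z_Aint.
have : (p%:R - p.-1%:R : algC) \in P by rewrite (PidealB HP) ?(Pideal_natp HP).
by rewrite -natrB ?leq_pred // -subn1 subKn ?prime_gt0 // (negPf (Pideal1 HP)).
Qed.

Lemma unity_roots_P_inj u v :
  u \in unity_roots p.-1 -> v \in unity_roots p.-1 -> u - v \in P -> u = v.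
Proof.
rewrite !unity_rootsE => /mapP[i _ ->] /mapP[j]; rewrite mem_iota => /andP[_ jp] -> Puv.
set k := ((i + (p.-1 - j)) %% p.-1)%N.
have Ek : z ^+ (p.-1 - j) * (z ^+ i - z ^+ j) = z ^+ k - 1.
  rewrite /k (prim_expr_mod z_prim) mulrBr -!exprD subnK ?(ltnW jp) //.
  by rewrite (prim_expr_order z_prim) addnC.
have [k0 | k_gt0] := posnP k.
  move/eqP: Ek; rewrite k0 subrr mulf_eq0 expf_eq0 (prim_root_eq0 z_prim).
  by rewrite eqn0Ngt pred_p_gt0 andbF subr_eq0 => /eqP.
have : 1 - z ^+ k \notin P by rewrite one_sub_prim_root_notin_P // k_gt0 ltn_pmod ?pred_p_gt0.
by rewrite -opprB -Ek (PidealN HP) ?(PidealMl HP) ?rpredX ?z_Aint.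
Qed.

Lemma exists_unity_root_congr a :
  ~~ (p %| a)%N -> exists2 u, u \in unity_roots p.-1 & u - a%:R \in P.
Proof.
move=> pNa; have a_gt0 : (0 < a)%N by case: a pNa; rewrite ?dvdn0.
have : \prod_(0 <= i < p.-1) (a%:R - z ^+ i) \in P.
  rewrite (prod_sub_prim_root z_prim).
  have -> : (a%:R ^+ p.-1 - 1 : algC) = (a ^ p.-1 - 1)%N%:R.
    by rewrite natrB ?expn_gt0 ?a_gt0 // natrX.
  by rewrite (Pideal_nat_dvd HP) ?fermat_dvdn.
case/(Pideal_prodP HP) => [i | i]; first by rewrite rpredB ?rpred_nat ?rpredX ?z_Aint.
rewrite mem_index_iota => ip Pi; exists (z ^+ i); last by rewrite -opprB (PidealN HP).
by rewrite unity_rootsE map_f // mem_iota.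
Qed.

Lemma teich_spec a :
  ~~ (p %| a)%N -> teich P p a \in unity_roots p.-1 /\ teich P p a - a%:R \in P.
Proof.
move=> pNa; rewrite /teich (negPf pNa).
have [u u_root Pu] := exists_unity_root_congr pNa.
have /(head_filter_mem 0) : has (fun x => P (x - a%:R)) (unity_roots p.-1).
  by apply/hasP; exists u.
by rewrite mem_filter => /andP[Pt t_root]; split.
Qed.

Lemma teich_eq a u :
  ~~ (p %| a)%N -> u \in unity_roots p.-1 -> u - a%:R \in P -> teich P p a = u.
Proof.
move=> pNa u_root Pu; have [t_root Pt] := teich_spec pNa.
apply: unity_roots_P_inj => //.
have -> : teich P p a - u = (teich P p a - a%:R) - (u - a%:R) by ring.
exact: (PidealB HP).
Qed.

Lemma teichM a b :
  ~~ (p %| a)%N -> ~~ (p %| b)%N -> teich P p (a * b) = teich P p a * teich P p b.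
Proof.
move=> pNa pNb; have [a_root Pa] := teich_spec pNa; have [b_root Pb] := teich_spec pNb.
apply: teich_eq; rewrite ?Euclid_dvdM // ?negb_or ?pNa ?pNb ?unity_rootsM //.
have -> : teich P p a * teich P p b - (a * b)%N%:R =
    teich P p a * (teich P p b - b%:R) + b%:R * (teich P p a - a%:R) by rewrite natrM; ring.
by rewrite (PidealD HP) ?(PidealMl HP) ?rpred_nat ?unity_roots_Aint.
Qed.

Lemma teich_exp_addn a n c :
  (0 < n)%N -> (p.-1 %| c)%N -> teich P p a ^+ (n + c) = teich P p a ^+ n.
Proof.
move=> n_gt0 /dvdnP[l ->]; have [pa | pNa] := boolP (p %| a)%N.
  by rewrite /teich pa !expr0n addn_eq0 eqn0Ngt n_gt0.
have [t_root _] := teich_spec pNa.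
by rewrite exprD mulnC exprM (unity_roots_exp t_root) expr1n mulr1.
Qed.

Lemma teich_addn_dvdn a N : (p %| N)%N -> teich P p (a + N) = teich P p a.
Proof.
move=> pN; rewrite /teich dvdn_addl //; case: (p %| a)%N => //; congr head.
apply: eq_filter => x; rewrite natrD opprD addrA.
have PN : (N%:R : algC) \in P by apply: (Pideal_nat_dvd HP).
apply/idP/idP => Px; last exact: (PidealB HP).
by rewrite -[x - a%:R](subrK N%:R); apply: (PidealD HP).
Qed.

End Teichmuller.

Lemma coprime_by_primes x N :
  (0 < N)%N -> (forall q, prime q -> (q %| N)%N -> ~~ (q %| x)%N) -> coprime x N.
Proof.
move=> N_gt0 noq; apply: contraT => ncop.
have gt1 : (1 < gcdn x N)%N by rewrite ltn_neqAle eq_sym ncop gcdn_gt0 N_gt0 orbT.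
have := noq _ (pdiv_prime gt1) (dvdn_trans (pdiv_dvd _) (dvdn_gcdr _ _)).
by rewrite (dvdn_trans (pdiv_dvd _) (dvdn_gcdl _ _)).
Qed.

(* A prime of [N] dividing [a] divides neither [d] nor the product; any other
   prime of [N] divides the product but not [a]. *)
Lemma coprime_add_mul_primes N d a : (0 < N)%N -> coprime a d ->
  coprime (a + d * \prod_(q <- primes N | ~~ (q %| a)%N) q) N.
Proof.
move=> N_gt0 cad; apply: coprime_by_primes => // q q_pr qN.
have [qa | qNa] := boolP (q %| a)%N; last first.
  rewrite dvdn_addl ?dvdn_mull // -big_filter (bigD1_seq q) ?dvdn_mulr //=.
    by rewrite mem_filter qNa mem_primes q_pr N_gt0 qN.
  exact/filter_uniq/primes_uniq.
rewrite dvdn_addr // Euclid_dvdM // negb_or -prime_coprime // (coprime_dvdl qa cad) /=.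
rewrite Euclid_dvd_prod // big_has_cond; apply/hasPn => q' q'N /=.
rewrite mem_primes in q'N; case/and3P: q'N => q'_pr _ _.
by rewrite (dvdn_prime2 q_pr q'_pr) negb_and negbK; case: eqP => [<- | _]; rewrite ?qa ?orbT.
Qed.

Lemma exists_coprime_lift N d a : (0 < N)%N -> coprime a d ->
  has (fun t => coprime (a + d * t) N) (iota 0 N).
Proof.
move=> N_gt0 cad; apply/hasP; exists ((\prod_(q <- primes N | ~~ (q %| a)%N) q) %% N)%N.
  by rewrite mem_iota ltn_pmod.
by rewrite -coprime_modl -modnDmr modnMmr modnDmr coprime_modl coprime_add_mul_primes.
Qed.

Section PrimitiveAssociated.
Variables (N : nat) (g : nat -> algC).
Hypotheses (N_gt0 : (0 < N)%N) (g_per : forall a, g (a + N)%N = g a).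
Hypothesis g_mul : forall a b, coprime a N -> coprime b N -> g (a * b)%N = g a * g b.

Local Notation F := (conductor N g).
Local Notation psi := (prim_assoc N g).
Local Notation lift := (lift_coprime N F).

Lemma induced_mod_self : induced_mod N N g.
Proof.
rewrite /induced_mod dvdnn; apply/forallP => a; apply/forallP => b.
by apply/implyP => /and3P[_ _]; rewrite !modn_small // => /eqP/val_inj ->.
Qed.

Lemma conductor_induced : induced_mod N F g.
Proof.
have : has (fun d => induced_mod N d g) (iota 1 N).
  by apply/hasP; exists N; rewrite ?induced_mod_self // mem_iota N_gt0 add1n ltnSn.
by move/(head_filter_mem N); rewrite mem_filter => /andP[].
Qed.

Lemma conductor_dvdn : (F %| N)%N.
Proof. by case/andP: conductor_induced. Qed.

Lemma induced_eq x y : coprime x N -> coprime y N -> x = y %[mod F] -> g x = g y.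
Proof.
move=> cx cy exy; case/andP: conductor_induced => _ /forallP/(_ (Ordinal (ltn_pmod x N_gt0))).
move/forallP/(_ (Ordinal (ltn_pmod y N_gt0)))/implyP.
rewrite /= !coprime_modl cx cy !(modn_dvdm _ conductor_dvdn) exy eqxx !(periodic_modn g_per).
by move/(_ isT)/eqP.
Qed.

Lemma lift_coprimeP a : coprime a F -> coprime (lift a) N /\ lift a = a %[mod F].
Proof.
move=> caF; split; last by rewrite /lift_coprime addnC mulnC modnMDl.
have /(head_filter_mem 0) := exists_coprime_lift N_gt0 caF.
by rewrite mem_filter => /andP[].
Qed.

Lemma prim_assoc_per a : psi (a + F)%N = psi a.
Proof.
rewrite /prim_assoc -coprime_modl modnDr coprime_modl; case: ifP => // caF.
have caF' : coprime (a + F) F by rewrite -coprime_modl modnDr coprime_modl.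
have [c1 e1] := lift_coprimeP caF; have [c2 e2] := lift_coprimeP caF'.
by apply: induced_eq; rewrite // e1 e2 modnDr.
Qed.

Lemma prim_assoc_mul a b : psi (a * b)%N = psi a * psi b.
Proof.
rewrite /prim_assoc coprimeMl.
have [caF | _] := boolP (coprime a F); last by rewrite mul0r.
have [cbF | _] := boolP (coprime b F); last by rewrite mulr0.
have cabF : coprime (a * b) F by rewrite coprimeMl caF cbF.
have [c1 e1] := lift_coprimeP caF; have [c2 e2] := lift_coprimeP cbF.
have [c3 e3] := lift_coprimeP cabF.
rewrite -g_mul //; apply: induced_eq; rewrite ?coprimeMl ?c1 ?c2 //.
by rewrite e3 -[RHS]modnMm e1 e2 modnMm.
Qed.

Lemma prim_assoc_Aint : (forall a, g a \in Aint) -> forall a, psi a \in Aint.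
Proof. by move=> gA a; rewrite /prim_assoc; case: ifP; rewrite ?rpred0. Qed.

End PrimitiveAssociated.

Section DirichletCharacter.
Variables (f : nat) (chi : nat -> algC).
Hypothesis chiD : is_dirichlet f chi.

Lemma dirichlet_per a : chi (a + f)%N = chi a. Proof. by case: chiD. Qed.
Lemma dirichletM a b : chi (a * b)%N = chi a * chi b. Proof. by case: chiD. Qed.

Lemma dirichletX a k : chi (a ^ k)%N = chi a ^+ k.
Proof.
elim: k => [|k IHk]; first by case: chiD.
by rewrite expnS dirichletM IHk exprS.
Qed.

Lemma dirichlet_Aint a : chi a \in Aint.
Proof.
case: chiD => f_gt0 chi1 _ _ chi0; have [caf | ncaf] := boolP (coprime a f); last first.
  by rewrite -chi0 in ncaf; rewrite (eqP ncaf) rpred0.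
apply: (@Aint_unity_root (totient f)); first by rewrite totient_gt0.
rewrite unity_rootE -dirichletX -(periodic_modn dirichlet_per).
by rewrite Euler_exp_totient // (periodic_modn dirichlet_per) chi1.
Qed.

End DirichletCharacter.

Section TwistedCharacter.
Variables (p f : nat) (chi : nat -> algC) (P : pred algC).
Hypotheses (HP : prime_ideal_above p P) (p_pr : prime p) (chiD : is_dirichlet f chi).

Local Notation N := (lcmn f p).
Local Notation chi_tw := (chi_tw P p f chi).

Lemma lcmn_fp_gt0 : (0 < N)%N.
Proof. by rewrite lcmn_gt0 (prime_gt0 p_pr) andbT; case: chiD. Qed.

Lemma coprime_lcm_prime a : coprime a N -> ~~ (p %| a)%N.
Proof. by move=> caN; rewrite -prime_coprime // coprime_sym (coprime_dvdr (dvdn_lcmr f p)). Qed.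

Lemma chi_tw_per n a : chi_tw n (a + N) = chi_tw n a.
Proof.
rewrite /chi_tw (teich_addn_dvdn HP) ?dvdn_lcmr // -coprime_modl modnDr coprime_modl.
by case/dvdnP: (dvdn_lcml f p) => l ->; rewrite (periodic_addMn (dirichlet_per chiD)).
Qed.

Lemma chi_twM n a b :
  coprime a N -> coprime b N -> chi_tw n (a * b) = chi_tw n a * chi_tw n b.
Proof.
move=> caN cbN; rewrite /chi_tw coprimeMl caN cbN /= (dirichletM chiD).
by rewrite (teichM HP p_pr) ?coprime_lcm_prime // exprMn invfM; ring.
Qed.

Lemma chi_tw_Aint n a : chi_tw n a \in Aint.
Proof.
rewrite /chi_tw; case: ifP => caN; last exact: rpred0.
rewrite rpredM ?(dirichlet_Aint chiD) //.
have [t_root _] := teich_spec HP p_pr (coprime_lcm_prime caN).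
apply: (@Aint_unity_root p.-1); first exact: pred_p_gt0.
by rewrite unity_rootE exprVn -exprAC (unity_roots_exp p_pr t_root) expr1n invr1.
Qed.

Lemma chi_tw_addn n c : (0 < n)%N -> (p.-1 %| c)%N -> chi_tw (n + c) = chi_tw n.
Proof.
move=> n_gt0 pc; apply: functional_extensionality => a.
by rewrite /chi_tw (teich_exp_addn HP p_pr).
Qed.

End TwistedCharacter.

Section Delta.
Variables (c k n : nat).

Lemma eq_Delta u v :
  (forall j, (j <= k)%N -> u (n + j * c)%N = v (n + j * c)%N) -> Delta c k u n = Delta c k v n.
Proof. by move=> euv; apply: eq_bigr => j _; rewrite euv // -ltnS. Qed.

Lemma DeltaD u v : Delta c k (fun m => u m + v m) n = Delta c k u n + Delta c k v n.
Proof. by rewrite /Delta -big_split; apply: eq_bigr => j _; rewrite mulrDr. Qed.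

Lemma Delta_power_sum (I : Type) (r : seq I) (Q : pred I) (w b : I -> algC) :
  Delta c k (fun m => \sum_(i <- r | Q i) w i * b i ^+ m) n =
  \sum_(i <- r | Q i) w i * b i ^+ n * (b i ^+ c - 1) ^+ k.
Proof.
rewrite /Delta; under eq_bigr do rewrite mulr_sumr; rewrite exchange_big /=.
apply: eq_bigr => i _; rewrite addrC exprDn mulr_sumr; apply: eq_bigr => j _.
by rewrite exprD mulnC exprM -mulr_natl; ring.
Qed.

Variables (p : nat) (P : pred algC).
Hypothesis HP : prime_ideal_above p P.

Lemma Delta_div_P_integral u :
  (forall j, P_integral P (u (n + j * c)%N / p%:R ^+ k)) ->
  P_integral P (Delta c k u n / p%:R ^+ k).
Proof.
move=> Pu; rewrite /Delta mulr_suml; apply: (P_integral_sum HP) => j.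
rewrite -!mulrA; apply: (P_integralM HP); first exact: (P_integral_nat HP).
apply: (P_integralM HP); last exact: Pu.
by apply: (P_integral_Aint HP); rewrite rpredX ?rpredN ?rpred1.
Qed.

End Delta.

Definition alt_power_sum_p' (p M : nat) (psi : nat -> algC) (m : nat) : algC :=
  \sum_(1 <= a < M.+1 | ~~ (p %| a)%N) (-1) ^+ a * psi a * a%:R ^+ m.

Section EulerCongruence.
Variables (p : nat) (P : pred algC).
Hypotheses (HP : prime_ideal_above p P) (p_odd : odd p) (p_pr : prime p).
Variable psi : nat -> algC.
Hypothesis psi_Aint : forall a, psi a \in Aint.

Lemma Delta_alt_power_sum_p' M c k n : (p.-1 %| c)%N ->
  P_integral P (Delta c k (alt_power_sum_p' p M psi) n / p%:R ^+ k).
Proof.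
move=> pc; rewrite Delta_power_sum mulr_suml big_mkcond; apply: (P_integral_sum HP) => a /=.
case: ifP => [pNa | _]; last exact: (P_integral_Aint HP (rpred0 _)).
have [q qE] := dvdnP (fermat_dvdn p_pr pc pNa).
have -> : (a%:R ^+ c - 1 : algC) = q%:R * p%:R.
  by rewrite -natrM -qE natrB ?expn_gt0 ?natrX //; case: (a) pNa; rewrite ?dvdn0.
have pk_neq0 : (p%:R : algC) ^+ k != 0 by rewrite expf_neq0 ?pnatr_eq0 -?lt0n ?prime_gt0.
rewrite exprMn mulrA mulfK //; apply: (P_integral_Aint HP).
by rewrite !rpredM ?rpredX ?rpredN ?rpred1 ?rpred_nat.
Qed.

Variable F : nat.
Hypotheses (F_odd : odd F) (psi_per : forall a, psi (a + F)%N = psi a).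
Hypothesis psi_mul : forall a b, psi (a * b)%N = psi a * psi b.

Lemma alt_power_sum_mulp M m :
  alt_power_sum (p * M) psi m =
  alt_power_sum_p' p (p * M) psi m + psi p * p%:R ^+ m * alt_power_sum M psi m.
Proof.
rewrite /alt_power_sum /alt_power_sum_p' (bigID (fun a => p %| a)%N) /= addrC.
rewrite sum_multiples ?prime_gt0 // mulr_sumr; congr (_ + _); apply: eq_bigr => b _.
have sgp : (-1) ^+ p = -1 :> algC by rewrite -signr_odd p_odd expr1.
by rewrite psi_mul natrM exprMn exprM sgp; ring.
Qed.

Lemma euler_factor_congr k m :
  P_integral P (((1 - psi p * p%:R ^+ m) * gen_euler F psi m
                 - alt_power_sum_p' p (F * p ^ k.+1) psi m) / p%:R ^+ k).
Proof.
have oddX j : odd (p ^ j) by rewrite oddX p_odd orbT.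
have [W1 PW1 E1] := gen_euler_cong HP p_odd psi_Aint F_odd psi_per m (oddX k.+1).
have [W2 PW2 E2] := gen_euler_cong HP p_odd psi_Aint F_odd psi_per m (oddX k).
have := alt_power_sum_mulp (F * p ^ k) m; rewrite mulnCA -expnS => Esum.
have pk_neq0 : (p%:R : algC) ^+ k != 0 by rewrite expf_neq0 ?pnatr_eq0 -?lt0n ?prime_gt0.
have -> : ((1 - psi p * p%:R ^+ m) * gen_euler F psi m - alt_power_sum_p' p (F * p ^ k.+1) psi m)
    / p%:R ^+ k = F%:R * p%:R * W1 - psi p * p%:R ^+ m * F%:R * W2.
  by rewrite [(1 - _) * _]mulrBl mul1r {1}E1 E2 Esum !natrM !natrX exprSr; field.
apply: (P_integralB HP); apply: (P_integralM HP) => //; apply: (P_integral_Aint HP).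
  by rewrite rpredM ?rpred_nat.
by rewrite !rpredM ?rpredX ?rpred_nat.
Qed.

End EulerCongruence.

Theorem theorem3p1 (p f : nat) (chi : nat -> algC) (P : pred algC) (n c k : nat) :
  prime p -> odd p -> odd f -> primitive_char f chi ->
  prime_ideal_above p P ->
  (0 < n)%N -> (0 < c)%N -> (0 < k)%N -> (p.-1 %| c)%N ->
  P_integral P (Delta c k (eps P p f chi) n / (p%:R) ^+ k).
Proof.
move=> p_pr p_odd f_odd [chiD _] HP n_gt0 _ _ pc.
set N := lcmn f p; set g := chi_tw P p f chi n.
have N_gt0 : (0 < N)%N := lcmn_fp_gt0 p_pr chiD.
have N_odd : odd N.
  apply: (@dvdn_odd _ (f * p)); last by rewrite oddM f_odd.
  by rewrite dvdn_lcm dvdn_mulr ?dvdn_mull.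
have g_per := chi_tw_per HP chiD n; have g_mul := chi_twM HP p_pr chiD n.
set psi := prim_assoc N g; set F := conductor N g.
have psi_Aint := @prim_assoc_Aint N _ (chi_tw_Aint HP p_pr chiD n).
have F_odd : odd F := dvdn_odd (conductor_dvdn g N_gt0) N_odd.
set S := alt_power_sum_p' p (F * p ^ k.+1) psi.
rewrite (eq_Delta (v := fun m => (1 - psi p * p%:R ^+ m) * gen_euler F psi m - S m + S m)).
  rewrite DeltaD mulrDl; apply: (P_integralD HP); last exact: Delta_alt_power_sum_p'.
  apply: Delta_div_P_integral => // j; apply: euler_factor_congr => //.
    exact: prim_assoc_per.
  exact: prim_assoc_mul.
by move=> j _; rewrite subrK /eps /chi_n /cond_n chi_tw_addn ?dvdn_mull.
Qed.
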